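(* Let $N$ be a Niemeier lattice rationally generated by roots, let $R=\bigoplus_{k\in\Omega}R_k$ be its maximal root system decomposed into irreducible components, so that $N\subset R^\vee=\bigoplus_kR_k^\vee$, and for $v\in N$ let $v_k\in R_k^\vee$ be its orthogonal projection. If $l\in N$ satisfies $l^2=4$ and $l\cdot\hbar=4$ for some $\hbar\in N$, and $l\bmod R\neq0$ in $R^\vee/R$, then for every $k\in\Omega$ the vector $l_k$ is a vector of minimal square in its class $l_k+R_k\subset R_k^\vee$.
   Context: A Niemeier lattice is a positive definite even unimodular lattice of rank $24$. A root is a vector of square $2$. The maximal root system $R\subset N$ is the sublattice generated by all roots of $N$; it decomposes uniquely into an orthogonal sum of irreducible root systems $R_k$ (of types $A_n,D_n,E_6,E_7,E_8$). *)

(* A rank-24 lattice is modelled, up to isometry, as Z^24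
   with an integral Gram matrix G; we work inside Q^24 = 'rV[rat]_24. *)
From HB Require Import structures.
From mathcomp Require Import all_boot all_order all_algebra.
From Stdlib Require Import Relations.
Set Implicit Arguments. Unset Strict Implicit. Unset Printing Implicit Defensive.
Import Order.TTheory GRing.Theory Num.Theory.
Local Open Scope ring_scope.

Section Defs.
Variable n : nat.

Definition lform (G : 'M[int]_n) (x y : 'rV[rat]_n) : rat :=
  (x *m map_mx intr G *m y^T) 0 0.

Definition isint (x : 'rV[rat]_n) : Prop := forall i, x 0 i \is a Num.int.

Definition even_unimodular_posdef (G : 'M[int]_n) : Prop :=
  [/\ G^T = G,
      forall i, (2 %| G i i)%Z,
      \det G = 1 &
      forall x : 'rV[rat]_n, x != 0 -> 0 < lform G x x].

Definition is_root (G : 'M[int]_n) (v : 'rV[rat]_n) : Prop :=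
  isint v /\ lform G v v = 2.

Definition root_adj (G : 'M[int]_n) (u v : 'rV[rat]_n) : Prop :=
  [/\ is_root G u, is_root G v & lform G u v != 0].

Definition component (G : 'M[int]_n) (r0 : 'rV[rat]_n) (v : 'rV[rat]_n) : Prop :=
  is_root G v /\ clos_refl_trans _ (root_adj G) r0 v.

Inductive zspan (S : 'rV[rat]_n -> Prop) : 'rV[rat]_n -> Prop :=
| zspan0 : zspan S 0
| zspanD : forall s x, S s -> zspan S x -> zspan S (s + x)
| zspanB : forall s x, S s -> zspan S x -> zspan S (x - s).

Inductive qspan (S : 'rV[rat]_n -> Prop) : 'rV[rat]_n -> Prop :=
| qspan0 : qspan S 0
| qspanD : forall (c : rat) s x, S s -> qspan S x -> qspan S (c *: s + x).

Definition orth_proj (G : 'M[int]_n) (S : 'rV[rat]_n -> Prop)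
  (v w : 'rV[rat]_n) : Prop :=
  qspan S w /\ forall s, S s -> lform G (v - w) s = 0.

End Defs.

From HB Require Import structures.
From mathcomp Require Import all_boot all_order all_algebra.
From Stdlib Require Import Relations.
From mathcomp Require Import ring zify.
Set Implicit Arguments. Unset Strict Implicit. Unset Printing Implicit Defensive.
Import Order.TTheory GRing.Theory Num.Theory.
Local Open Scope ring_scope.

(* Let R be the root lattice of the even lattice N and l a vector of N with
   l^2 = 4 and l not in R.  First, l has minimal norm in its coset l + R: for
   x in R the vector y = l + x lies in N and has even norm y^2 = 4 + 2 l.x + x^2;
   if y^2 < 4 then either y = 0 or y is a root, and in both cases l = y - x
   would lie in R.  Second, let l_k be the orthogonal projection of l onto the
   span of an irreducible component R_k.  For x in R_k we have l_k.x = l.x, so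
   (l_k + x)^2 - l_k^2 = 2 l.x + x^2 = (l + x)^2 - l^2 >= 0 since R_k is
   contained in R. *)

Section LatticeForm.
Variable n : nat.
Variable G : 'M[int]_n.
Notation lf := (lform G).
Notation vec := ('rV[rat]_n).

Lemma lfDl x y z : lf (x + y) z = lf x z + lf y z.
Proof. by rewrite /lform !mulmxDl mxE. Qed.

Lemma lfDr x y z : lf x (y + z) = lf x y + lf x z.
Proof. by rewrite /lform linearD /= mulmxDr mxE. Qed.

Lemma lfNl x y : lf (- x) y = - lf x y.
Proof. by rewrite /lform !mulNmx mxE. Qed.

Lemma lfNr x y : lf x (- y) = - lf x y.
Proof. by rewrite /lform linearN /= mulmxN mxE. Qed.

Lemma lfBr x y z : lf x (y - z) = lf x y - lf x z.
Proof. by rewrite lfDr lfNr. Qed.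

Lemma lf0r x : lf x 0 = 0.
Proof. by rewrite /lform trmx0 mulmx0 mxE. Qed.

Lemma lfC : G^T = G -> forall x y, lf x y = lf y x.
Proof.
move=> G_sym x y; rewrite /lform -[in LHS](trmxK (x *m _ *m _)) [in LHS]mxE.
by rewrite !trmx_mul trmxK map_trmx G_sym mulmxA.
Qed.

Lemma isint0 : isint (0 : vec).
Proof. by move=> i; rewrite mxE. Qed.

Lemma isintD (x y : vec) : isint x -> isint y -> isint (x + y).
Proof. by move=> hx hy i; rewrite mxE rpredD. Qed.

Lemma isintN (x : vec) : isint x -> isint (- x).
Proof. by move=> hx i; rewrite mxE rpredN. Qed.

Lemma lf_int x y : isint x -> isint y -> lf x y \is a Num.int.
Proof.
move=> hx hy; rewrite /lform !mxE; apply: rpred_sum => j _.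
rewrite !mxE; apply: rpredM; last exact: hy.
apply: rpred_sum => i _; rewrite !mxE; apply: rpredM; first exact: hx.
exact: intr_int.
Qed.

Lemma zspan1 (S : vec -> Prop) s : S s -> zspan S s.
Proof. by move=> hs; rewrite -[s]addr0; apply: zspanD => //; constructor. Qed.

Lemma zspanN (S : vec -> Prop) x : zspan S x -> zspan S (- x).
Proof.
elim=> [|s y hs _ ih|s y hs _ ih]; first by rewrite oppr0; constructor.
  by rewrite opprD addrC; apply: zspanB.
by rewrite opprB; apply: zspanD.
Qed.

Lemma zspan_add (S : vec -> Prop) x y : zspan S x -> zspan S y -> zspan S (x + y).
Proof.
move=> hx hy; elim: hx => [|s z hs _ ih|s z hs _ ih]; first by rewrite add0r.
  by rewrite -addrA; apply: zspanD.
by rewrite addrAC; apply: zspanB.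
Qed.

Lemma zspan_sub (S T : vec -> Prop) x :
  (forall s, S s -> T s) -> zspan S x -> zspan T x.
Proof.
move=> ST; elim=> [|s y hs _ ih|s y hs _ ih]; first by constructor.
  by apply: zspanD; first exact: ST.
by apply: zspanB; first exact: ST.
Qed.

Lemma orth_proj_zspan (S : vec -> Prop) v w x :
  orth_proj G S v w -> zspan S x -> lf (v - w) x = 0.
Proof.
case=> _ orthS; elim=> [|s y hs _ ih|s y hs _ ih]; first exact: lf0r.
  by rewrite lfDr ih orthS // addr0.
by rewrite lfBr ih orthS // subr0.
Qed.

Hypothesis G_sym : G^T = G.

Lemma norm_shift_orth v w x : lf (v - w) x = 0 ->
  lf (w + x) (w + x) - lf w w = lf (v + x) (v + x) - lf v v.
Proof.
rewrite lfDl lfNl => /eqP; rewrite subr_eq0 => /eqP wx.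
rewrite !lfDl !lfDr (lfC G_sym x w) (lfC G_sym x v) wx; ring.
Qed.

Lemma zspan_roots_even x : zspan (is_root G) x ->
  isint x /\ exists k : int, lf x x = (2 * k)%:~R.
Proof.
elim=> [|s y [ir ns] _ [iy [k hk]]|s y [ir ns] _ [iy [k hk]]].
- by split; [exact: isint0 | exists 0; rewrite lf0r].
- have [m hm] := intrP (lf_int ir iy).
  split; first exact: isintD.
  exists (1 + m + k)%R; rewrite !lfDl !lfDr (lfC G_sym y s) ns hk hm.
  rewrite !(intrD, intrM) /=; ring.
- have [m hm] := intrP (lf_int ir iy).
  split; first by apply: isintD => //; exact: isintN.
  exists (1 - m + k)%R; rewrite !lfDl !lfDr !lfNl !lfNr (lfC G_sym y s) ns hk hm.
  rewrite !(intrD, intrM, intrN) /=; ring.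
Qed.

Hypothesis G_pos : forall x : vec, x != 0 -> 0 < lf x x.

Lemma norm4_minimal_in_coset l x :
  isint l -> lf l l = 4 -> ~ zspan (is_root G) l -> zspan (is_root G) x ->
  lf l l <= lf (l + x) (l + x).
Proof.
move=> hl hl2 hnotR hx; have [ix [k hk]] := zspan_roots_even hx.
have [m hm] := intrP (lf_int hl ix).
pose y := l + x.
have hy : lf y y = (2 * (2 + m + k))%:~R.
  rewrite /y !lfDl !lfDr (lfC G_sym x l) hl2 hm hk !(intrD, intrM) /=; ring.
have l_eq : l = y - x by rewrite /y addrK.
rewrite hl2 -/y hy (_ : 4 = (2 * 2)%:~R) // ler_int.
case: (lerP 2 (2 + m + k)) => [|small]; first by lia.
exfalso; apply: hnotR; rewrite l_eq.
have [y0 | ny0] := eqVneq y 0; first by rewrite y0 sub0r; exact: zspanN.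
have norm2 : 2 + m + k = 1.
  by have := G_pos ny0; rewrite hy ltr0z; lia.
have y_root : is_root G y by split; [exact: isintD | rewrite hy norm2].
by apply: zspan_add; [exact: zspan1 | exact: zspanN].
Qed.

End LatticeForm.

Lemma component_root (n : nat) (G : 'M[int]_n) r0 s :
  component G r0 s -> is_root G s.
Proof. by case. Qed.

Theorem lemma4p1 (G : 'M[int]_24)
  (hN : even_unimodular_posdef G)
  (hgen : forall x : 'rV[rat]_24, qspan (is_root G) x)
  (l hbar : 'rV[rat]_24) (hl : isint l) (hhbar : isint hbar)
  (hl2 : lform G l l = 4) (hlh : lform G l hbar = 4)
  (hnotR : ~ zspan (is_root G) l)
  (r0 : 'rV[rat]_24) (hr0 : is_root G r0)
  (lk : 'rV[rat]_24) (hlk : orth_proj G (component G r0) l lk) :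
  forall x : 'rV[rat]_24, zspan (component G r0) x ->
    lform G lk lk <= lform G (lk + x) (lk + x).
Proof.
case: hN => G_sym _ _ G_pos x hx.
have hxR : zspan (is_root G) x := zspan_sub (@component_root _ G r0) hx.
rewrite -subr_ge0 (norm_shift_orth G_sym (orth_proj_zspan hlk hx)) subr_ge0.
exact: norm4_minimal_in_coset.
Qed.
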